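(* Every mean-variance team stochastic game as described in the context has a deterministic joint policy $\boldsymbol{\mu}^*\in\mathcal{D}$ (i.e. each $\mu_i^*$ maps $\mathcal{S}$ to $\mathcal{A}_i$) such that $J(\boldsymbol{\mu}^* )=\max_{\boldsymbol{\mu}\in\mathcal{U}}J(\boldsymbol{\mu})$; in particular $\boldsymbol{\mu}^*$ is a Nash equilibrium, i.e. $J(\mu_i^*,\boldsymbol{\mu}_{-i}^* )\ge J(\mu_i,\boldsymbol{\mu}^*_{-i})$ for all $i\in\mathcal{N}$ and all $\mu_i\in\mathcal{U}_i$.
   Context: A team stochastic game consists of a finite set of agents $\mathcal{N}=\{1,\dots,N\}$, a finite state space $\mathcal{S}$, finite action sets $\mathcal{A}_i$ with joint action set $\mathcal{A}=\prod_i\mathcal{A}_i$, a transition kernel $P(s'|s,\boldsymbol{a})$ and a common reward $r:\mathcal{S}\times\mathcal{A}\to\mathbb{R}$. A policy of agent $i$ is $\mu_i:\mathcal{S}\to\Delta(\mathcal{A}_i)$ (set $\mathcal{U}_i$); a joint policy $\boldsymbol{\mu}=(\mu_1,\dots,\mu_N)\in\mathcal{U}=\prod_i\mathcal{U}_i$ selects $\boldsymbol{a}$ in state $s$ with probability $\prod_i\mu_i(a_i|s)$; $\mathcal{D}\subset\mathcal{U}$ is the set of deterministic joint policies. $(\mu_i,\boldsymbol{\mu}_{-i})$ denotes the joint policy in which agent $i$ uses $\mu_i$ and the others use $\boldsymbol{\mu}_{-i}$. Standing assumption: the Markov chain $P^{\boldsymbol{\mu}}(s'|s)=\sum_{\boldsymbol{a}}\boldsymbol{\mu}(\boldsymbol{a}|s)P(s'|s,\boldsymbol{a})$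 is ergodic for every $\boldsymbol{\mu}\in\mathcal{U}$, with stationary distribution $\pi^{\boldsymbol{\mu}}$. Define $\eta^{\boldsymbol{\mu}}=\sum_s\pi^{\boldsymbol{\mu}}(s)\sum_{\boldsymbol{a}}\boldsymbol{\mu}(\boldsymbol{a}|s)r(s,\boldsymbol{a})$ (long-run average reward), $\zeta^{\boldsymbol{\mu}}=\sum_s\pi^{\boldsymbol{\mu}}(s)\sum_{\boldsymbol{a}}\boldsymbol{\mu}(\boldsymbol{a}|s)(r(s,\boldsymbol{a})-\eta^{\boldsymbol{\mu}})^2$ (long-run variance), and for a fixed $\beta\ge0$, $J(\boldsymbol{\mu})=\eta^{\boldsymbol{\mu}}-\beta\zeta^{\boldsymbol{\mu}}$. *)

From HB Require Import structures.
From mathcomp Require Import all_boot all_order all_algebra.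
From mathcomp Require Import reals.
Set Implicit Arguments. Unset Strict Implicit. Unset Printing Implicit Defensive.
Import Order.TTheory GRing.Theory Num.Theory.
Local Open Scope ring_scope.

Section TeamGame.
Variables (R : realType) (N : nat) (S : finType) (A : 'I_N -> finType).

Definition jaction := {dffun forall i : 'I_N, A i}.

(* a (possibly randomized) joint policy: mu i s a_i = mu_i(a_i | s) *)
Definition jpolicy := forall i : 'I_N, S -> A i -> R.

Definition valid_local_policy (i : 'I_N) (m : S -> A i -> R) : Prop :=
  (forall s a, 0 <= m s a) /\ (forall s, \sum_(a : A i) m s a = 1).

Definition valid_policy (mu : jpolicy) : Prop :=
  forall i, valid_local_policy (mu i).

Definition jprob (mu : jpolicy) (s : S) (a : jaction) : R :=
  \prod_(i < N) mu i s (a i).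

Definition replace_policy (mu : jpolicy) (i : 'I_N) (m : S -> A i -> R)
  : jpolicy := dfwith mu m.

Definition det_policy (d : forall i : 'I_N, S -> A i) : jpolicy :=
  fun i s a => if a == d i s then 1 else 0.

Definition valid_kernel (P : S -> jaction -> S -> R) : Prop :=
  (forall s a s', 0 <= P s a s') /\ (forall s a, \sum_(s' : S) P s a s' = 1).

Definition Pmu (P : S -> jaction -> S -> R) (mu : jpolicy) (s s' : S) : R :=
  \sum_(a : jaction) jprob mu s a * P s a s'.

Fixpoint npow (Q : S -> S -> R) (n : nat) (s s' : S) : R :=
  match n with
  | 0%N => (s == s')%:R
  | k.+1 => \sum_(t : S) npow Q k s t * Q t s'
  end.

(* ergodic finite chain (irreducible and aperiodic), in the equivalent
   "regular / primitive" form: some power has all entries positive *)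
Definition ergodic (Q : S -> S -> R) : Prop :=
  exists n : nat, (0 < n)%N /\ forall s s', 0 < npow Q n s s'.

Definition stationary (Q : S -> S -> R) (pi : S -> R) : Prop :=
  (forall s, 0 <= pi s) /\ \sum_(s : S) pi s = 1 /\
  (forall s', \sum_(s : S) pi s * Q s s' = pi s').

(* long-run average reward, computed w.r.t. the stationary distribution pi *)
Definition eta (r : S -> jaction -> R) (mu : jpolicy) (pi : S -> R) : R :=
  \sum_(s : S) pi s * \sum_(a : jaction) jprob mu s a * r s a.

Definition zeta (r : S -> jaction -> R) (mu : jpolicy) (pi : S -> R) : R :=
  \sum_(s : S) pi s *
    \sum_(a : jaction) jprob mu s a * (r s a - eta r mu pi) ^+ 2.

Definition Jmv (beta : R) (r : S -> jaction -> R) (mu : jpolicy)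
  (pi : S -> R) : R :=
  eta r mu pi - beta * zeta r mu pi.

End TeamGame.

From mathcomp Require Import all_boot all_order all_algebra.
From mathcomp Require Import reals.
From mathcomp Require Import ring lra.
From mathcomp Require boolp.
Import Order.TTheory GRing.Theory Num.Theory.
Local Open Scope ring_scope.
Set Implicit Arguments. Unset Strict Implicit. Unset Printing Implicit Defensive.

(* Fix a reward [g].  Replacing a policy [mu] at one state [s0] by a fixed joint
   action [a] gives policies [mu_a] whose stationary distributions, suitably
   weighted, mix into an invariant measure of [mu]; by uniqueness of the
   stationary distribution of an ergodic chain this mixture is the stationary
   distribution of [mu] itself.  So the long-run average of [g] under [mu] is a
   convex combination of its averages under the [mu_a], and one of them does at
   least as well.  Repeating this at every state, some pure policy does at least
   as well as [mu].
   The variance is removed by linearization: with [e = eta(mu)] and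
   [g_e = (1 + 2 beta e) r - beta r^2], every policy [nu] satisfies
   [J(nu) = eta_nu(g_e) - beta e^2 + beta (eta(nu) - e)^2], and the last term
   vanishes at [nu = mu]; so a pure policy improving the average of [g_e] over
   [mu] also improves [J].  Hence a maximizer of [J] among the finitely many
   pure policies maximizes [J] over all policies, and being a team optimum it
   is a Nash equilibrium. *)

Lemma sum_dffun_prod (R : comNzRingType) (I : finType) (T_ : I -> finType)
    (F : forall i, T_ i -> R) :
  \sum_(a : {dffun forall i : I, T_ i}) \prod_i F i (a i) =
  \prod_i \sum_(b : T_ i) F i b.
Proof.
pose P_ i := [ffun b : T_ i => F i b].
transitivity (\prod_i \sum_(b : T_ i) P_ i b); last first.
  by apply: eq_bigr => i _; apply: eq_bigr => b _; rewrite ffunE.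
under [RHS]eq_bigr => i _ do rewrite (big_tag (fun i => P_ i) i).
rewrite bigA_distr_big_dep -big_fprod.
rewrite (reindex (@dffun_of_fprod I T_)); last exact/onW_bij/dffun_of_fprod_bij.
by apply: eq_bigr => t _; apply: eq_bigr => i _; rewrite !ffunE.
Qed.

Lemma convex_comb_le_max (R : realDomainType) (T : finType) (lam y : T -> R) :
  (forall a, 0 <= lam a) -> \sum_a lam a = 1 ->
  exists a, \sum_b lam b * y b <= y a.
Proof.
move=> lam_ge0 lam_sum1.
have [a0 _|T0] := pickP (@predT T); last first.
  by move: lam_sum1; rewrite big_pred0 // => /eqP; rewrite eq_sym oner_eq0.
have [a _ y_max] := @arg_maxP _ R T a0 predT y isT.
exists a; rewrite -[y a]mul1r -lam_sum1 mulr_suml.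
by apply: ler_sum => b _; rewrite ler_wpM2l //; exact: y_max.
Qed.

Section MarkovChain.
Variables (R : realType) (S : finType).
Implicit Types (Q : S -> S -> R) (v w pi : S -> R).

Definition stochastic Q : Prop :=
  (forall s s', 0 <= Q s s') /\ (forall s, \sum_s' Q s s' = 1).

Definition invariant_vec Q v : Prop := forall s', \sum_s v s * Q s s' = v s'.

Lemma stationary_card_gt0 Q pi : stationary Q pi -> (0 < #|S|)%N.
Proof.
move=> [_ [pi_sum1 _]]; have [s _|S0] := pickP (@predT S).
  by apply/card_gt0P; exists s.
by move: pi_sum1; rewrite big_pred0 // => /eqP; rewrite eq_sym oner_eq0.
Qed.

Lemma invariant_nonzero_exists Q (s0 : S) :
  stochastic Q -> exists2 w, invariant_vec Q w & exists s, w s != 0.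
Proof.
(* [Q - I] kills the constant vector, so it is singular. *)
move=> [_ Q_sum1]; pose n := #|S|.
pose M : 'M[R]_n := \matrix_(i, j) (Q (enum_val i) (enum_val j) - (i == j)%:R).
have M1 : M *m const_mx 1 = 0 :> 'cV[R]_n.
  apply/matrixP => i k; rewrite !mxE.
  under eq_bigr do rewrite !mxE mulr1.
  rewrite sumrB -(big_enum_val (fun s => Q (enum_val i) s)) Q_sum1.
  by rewrite (bigD1 i) //= eqxx big1 ?addr0 ?subrr // => j /negbTE; rewrite eq_sym => ->.
have /det0P [w w_neq0 wM] : \det M == 0.
  rewrite -det_tr; apply/det0P; exists (const_mx 1 : 'rV[R]_n).
    by apply/eqP => /matrixP /(_ 0 (enum_rank s0)); rewrite !mxE => /eqP; rewrite oner_eq0.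
  by apply: trmx_inj; rewrite trmx_mul trmxK trmx_const M1 trmx0.
exists (fun s => w 0 (enum_rank s)).
  move=> s'; have /matrixP /(_ 0 (enum_rank s')) := wM; rewrite !mxE.
  under eq_bigr do rewrite mxE enum_rankK mulrBr.
  rewrite sumrB => /eqP; rewrite subr_eq0 => /eqP w_inv.
  rewrite big_enum_val; under eq_bigr do rewrite enum_valK; rewrite w_inv.
  by rewrite (bigD1 (enum_rank s')) //= eqxx mulr1 big1 ?addr0 // => i /negbTE ->; rewrite mulr0.
apply/existsP; apply: contraR w_neq0 => /existsPn w0; apply/eqP/matrixP => i j.
by rewrite (ord1 i) mxE; apply/eqP; have := w0 (enum_val j); rewrite enum_valK negbK.
Qed.

Lemma invariant_norm Q w :
  stochastic Q -> invariant_vec Q w -> invariant_vec Q (fun s => `|w s|).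
Proof.
(* [|w|] is subinvariant and [Q] preserves total mass, so no inequality is strict. *)
move=> [Q_ge0 Q_sum1] w_inv.
have sub_inv s' : `|w s'| <= \sum_s `|w s| * Q s s'.
  rewrite -w_inv; apply: le_trans (ler_norm_sum _ _ _) _.
  by apply: ler_sum => s _; rewrite normrM (ger0_norm (Q_ge0 _ _)).
have mass : \sum_s' \sum_s `|w s| * Q s s' = \sum_s' `|w s'|.
  by rewrite exchange_big; apply: eq_bigr => s _; rewrite -mulr_sumr Q_sum1 mulr1.
have : \sum_s' (\sum_s `|w s| * Q s s' - `|w s'|) = 0 by rewrite sumrB mass subrr.
move/eqP; rewrite psumr_eq0 => [/allP gap0 s'|s' _]; last by rewrite subr_ge0 sub_inv.
by apply/eqP; rewrite -subr_eq0; exact: (implyP (gap0 s' (mem_index_enum _))).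
Qed.

Lemma stationary_exists Q (s0 : S) : stochastic Q -> exists pi, stationary Q pi.
Proof.
move=> Q_stoch; have [w w_inv [s ws_neq0]] := invariant_nonzero_exists s0 Q_stoch.
pose u s := `|w s|; have u_inv : invariant_vec Q u := invariant_norm Q_stoch w_inv.
have u_ge0 s' : 0 <= u s' := normr_ge0 _.
have mass_gt0 : 0 < \sum_s u s.
  apply: lt_le_trans (_ : u s <= _); first by rewrite normr_gt0.
  by rewrite (bigD1 s) //= lerDl sumr_ge0.
exists (fun s => u s / \sum_s u s); split; [|split].
- by move=> s'; rewrite divr_ge0 // ltW.
- by rewrite -mulr_suml divff // gt_eqF.
- by move=> s'; rewrite -(u_inv s') mulr_suml; apply: eq_bigr => s'' _; rewrite mulrAC.
Qed.

Lemma invariant_npow Q v n s' : invariant_vec Q v -> \sum_s v s * npow Q n s s' = v s'.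
Proof.
move=> v_inv; elim: n s' => [|n IHn] s' /=.
  by rewrite (bigD1 s') //= eqxx mulr1 big1 ?addr0 // => s /negbTE ->; rewrite mulr0.
under eq_bigr do rewrite mulr_sumr.
rewrite exchange_big /= -(v_inv s'); apply: eq_bigr => t _.
by rewrite -IHn mulr_suml; apply: eq_bigr => s _; rewrite mulrA.
Qed.

Lemma stationary_gt0 Q pi s : ergodic Q -> stationary Q pi -> 0 < pi s.
Proof.
move=> [n [_ Qn_gt0]] [pi_ge0 [pi_sum1 pi_inv]].
rewrite -(invariant_npow n s pi_inv).
have [t pit_gt0] : exists t, 0 < pi t.
  apply/existsP; apply: contraT => /existsPn pi_le0; move: pi_sum1.
  rewrite big1 => [/eqP|t _]; first by rewrite eq_sym oner_eq0.
  by apply/eqP; rewrite eq_le pi_ge0 andbT leNgt pi_le0.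
rewrite (bigD1 t) //=; apply: lt_le_trans (_ : pi t * npow Q n t s <= _).
  by rewrite mulr_gt0.
by rewrite lerDl sumr_ge0 // => t' _; rewrite mulr_ge0 // ltW.
Qed.

Lemma invariant_eq0 Q v t : ergodic Q -> (forall s, 0 <= v s) -> invariant_vec Q v ->
  v t = 0 -> forall s, v s = 0.
Proof.
move=> [n [_ Qn_gt0]] v_ge0 v_inv vt0 s.
move: (invariant_npow n t v_inv); rewrite vt0 => /eqP.
rewrite psumr_eq0 => [/allP/(_ s (mem_index_enum _))|s' _]; last first.
  by rewrite mulr_ge0 // ltW.
by rewrite mulf_eq0 (gt_eqF (Qn_gt0 _ _)) orbF => /eqP.
Qed.

Lemma invariant_proportional Q pi v : ergodic Q -> stationary Q pi ->
  (forall s, 0 <= v s) -> invariant_vec Q v -> exists c, forall s, v s = c * pi s.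
Proof.
move=> Q_erg pi_stat v_ge0 v_inv.
have pi_gt0 s := stationary_gt0 s Q_erg pi_stat.
have [s0 _|S0] := pickP (@predT S); last by exists 0 => s; have := S0 s.
have [m _ m_min] := @arg_minP _ R S s0 predT (fun s => v s / pi s) isT.
set c := v m / pi m; exists c => s; apply/eqP; rewrite -subr_eq0; apply/eqP.
(* [v - c pi] is a nonnegative invariant measure vanishing at the minimizer [m]. *)
apply: (invariant_eq0 (v := fun s => v s - c * pi s) (t := m) Q_erg).
- by move=> t; rewrite subr_ge0 -ler_pdivlMr //; exact: m_min.
- move=> s'; under eq_bigr do rewrite mulrBl -mulrA.
  by rewrite sumrB -mulr_sumr v_inv; case: pi_stat => _ [_ ->].
- by rewrite /c divfK ?subrr // gt_eqF.
Qed.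

Lemma stationary_unique Q pi1 pi2 : ergodic Q ->
  stationary Q pi1 -> stationary Q pi2 -> pi1 = pi2.
Proof.
move=> Q_erg pi1_stat pi2_stat; case: (pi1_stat) => [pi1_ge0 [pi1_sum1 pi1_inv]].
have [c pi1E] := invariant_proportional Q_erg pi2_stat pi1_ge0 pi1_inv.
have c1 : c = 1.
  case: pi2_stat => _ [pi2_sum1 _]; move: pi1_sum1.
  by under eq_bigr do rewrite pi1E; rewrite -mulr_sumr pi2_sum1 mulr1.
by apply: boolp.funext => s; rewrite pi1E c1 mul1r.
Qed.

End MarkovChain.

Section Policies.
Variables (R : realType) (N : nat) (S : finType) (A : 'I_N -> finType).
Implicit Types (mu : jpolicy R S A) (s : S) (a b : jaction A).

Lemma jprob_ge0 mu s b : valid_policy mu -> 0 <= jprob mu s b.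
Proof. by move=> mu_valid; apply: prodr_ge0 => i _; case: (mu_valid i). Qed.

Lemma jprob_sum1 mu s : valid_policy mu -> \sum_b jprob mu s b = 1.
Proof.
move=> mu_valid; rewrite /jprob (sum_dffun_prod (fun i x => mu i s x)).
by apply: big1 => i _; case: (mu_valid i) => _ ->.
Qed.

Lemma det_policy_valid (d : forall i : 'I_N, S -> A i) : valid_policy (det_policy R d).
Proof.
move=> i; split=> [s b|s]; rewrite /det_policy; first by case: eqP.
by rewrite -big_mkcond big_pred1_eq.
Qed.

Lemma replace_policy_valid mu i (m : S -> A i -> R) :
  valid_policy mu -> valid_local_policy m -> valid_policy (replace_policy mu m).
Proof.
move=> mu_valid m_valid j; rewrite /replace_policy.
by have [<-|ij] := eqVneq i j; rewrite ?dfwith_in ?dfwith_out.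
Qed.

Definition set_action mu (s0 : S) a : jpolicy R S A :=
  fun i s x => if s == s0 then (if x == a i then 1 else 0) else mu i s x.

Lemma set_action_valid mu s0 a : valid_policy mu -> valid_policy (set_action mu s0 a).
Proof.
move=> mu_valid i; case: (mu_valid i) => mu_ge0 mu_sum1.
split=> [s b|s]; rewrite /set_action; case: eqP => // _; first by case: eqP.
by rewrite -big_mkcond big_pred1_eq.
Qed.

Lemma jprob_set_action_at mu s0 a b :
  jprob (set_action mu s0 a) s0 b = if b == a then 1 else 0.
Proof.
rewrite /jprob /set_action eqxx; have [->|] := eqVneq b a.
  by apply: big1 => i _; rewrite eqxx.
move=> b_neq_a; have /forallPn [i /negbTE bai] : ~~ [forall i, b i == a i].
  by apply: contra b_neq_a => /forallP b_eq; apply/eqP/ffunP => i; apply/eqP.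
by rewrite (bigD1 i) //= bai mul0r.
Qed.

Lemma jprob_set_action_out mu s0 a s b : s != s0 ->
  jprob (set_action mu s0 a) s b = jprob mu s b.
Proof. by move=> /negbTE ss0; apply: eq_bigr => i _; rewrite /set_action ss0. Qed.

Definition deterministic_at mu s : Prop :=
  exists a, forall i x, mu i s x = if x == a i then 1 else 0.

Definition pure_policy (e : {ffun S -> jaction A}) : jpolicy R S A :=
  det_policy R (fun i s => e s i).

Lemma pure_policy_valid e : valid_policy (pure_policy e).
Proof. exact: det_policy_valid. Qed.

Lemma deterministic_pure_policy mu :
  (forall s, deterministic_at mu s) -> exists e, mu = pure_policy e.
Proof.
move=> /fin_all_exists [e mu_det]; exists [ffun s => e s].
apply: boolp.functional_extensionality_dep => i; apply: boolp.funext => s.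
by apply: boolp.funext => x; rewrite mu_det /pure_policy /det_policy ffunE.
Qed.

End Policies.

Section MeanVariance.
Variables (R : realType) (N : nat) (S : finType) (A : 'I_N -> finType).
Implicit Types (mu : jpolicy R S A) (pi : S -> R) (g h r : S -> jaction A -> R).

Lemma etaD g h mu pi :
  eta (fun s b => g s b + h s b) mu pi = eta g mu pi + eta h mu pi.
Proof.
rewrite /eta -big_split; apply: eq_bigr => s _ /=; rewrite -mulrDr -big_split /=.
by congr (_ * _); apply: eq_bigr => b _; rewrite mulrDr.
Qed.

Lemma etaZ (c : R) g mu pi : eta (fun s b => c * g s b) mu pi = c * eta g mu pi.
Proof.
rewrite /eta mulr_sumr; apply: eq_bigr => s _ /=; rewrite [RHS]mulrCA [in RHS]mulr_sumr.
by congr (_ * _); apply: eq_bigr => b _; rewrite mulrCA.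
Qed.

Lemma eta_cst (c : R) mu pi : valid_policy mu -> \sum_s pi s = 1 ->
  eta (fun _ _ => c) mu pi = c.
Proof.
move=> mu_valid pi_sum1; rewrite /eta -[RHS]mul1r -pi_sum1 mulr_suml.
by apply: eq_bigr => s _; rewrite -mulr_suml jprob_sum1 ?mul1r.
Qed.

Lemma zetaE r mu pi : valid_policy mu -> \sum_s pi s = 1 ->
  zeta r mu pi = eta (fun s b => r s b ^+ 2) mu pi - eta r mu pi ^+ 2.
Proof.
move=> mu_valid pi_sum1; rewrite /zeta; set e := eta r mu pi.
transitivity (eta (fun s b => r s b ^+ 2 + ((- (2 * e)) * r s b + e ^+ 2)) mu pi).
  by apply: eq_bigr => s _; congr (_ * _); apply: eq_bigr => b _; congr (_ * _); ring.
by rewrite !etaD etaZ eta_cst // -/e; ring.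
Qed.

Definition mv_linearization (beta : R) r (e : R) : S -> jaction A -> R :=
  fun s b => (1 + 2 * beta * e) * r s b + (- beta) * r s b ^+ 2.

Lemma Jmv_mv_linearization (beta e : R) r mu pi :
  valid_policy mu -> \sum_s pi s = 1 ->
  Jmv beta r mu pi = eta (mv_linearization beta r e) mu pi - beta * e ^+ 2
                     + beta * (eta r mu pi - e) ^+ 2.
Proof.
move=> mu_valid pi_sum1.
by rewrite /Jmv zetaE // /mv_linearization etaD !etaZ; ring.
Qed.

Lemma Jmv_le_mv_linearization (beta : R) r mu pi nu pi' :
  0 <= beta -> valid_policy mu -> \sum_s pi s = 1 ->
  valid_policy nu -> \sum_s pi' s = 1 ->
  eta (mv_linearization beta r (eta r mu pi)) mu pi <=
    eta (mv_linearization beta r (eta r mu pi)) nu pi' ->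
  Jmv beta r mu pi <= Jmv beta r nu pi'.
Proof.
move=> beta_ge0 mu_valid pi_sum1 nu_valid pi'_sum1 le_lin.
rewrite !(Jmv_mv_linearization beta (eta r mu pi)) // subrr expr0n mulr0 addr0.
have : 0 <= beta * (eta r nu pi' - eta r mu pi) ^+ 2 by rewrite mulr_ge0 ?sqr_ge0.
lra.
Qed.

End MeanVariance.

Section TeamGame.
Variables (R : realType) (N : nat) (S : finType) (A : 'I_N -> finType).
Variable P : S -> jaction A -> S -> R.
Hypothesis P_kernel : valid_kernel P.
Hypothesis Pmu_ergodic :
  forall mu : jpolicy R S A, valid_policy mu -> ergodic (Pmu P mu).
Implicit Types (mu : jpolicy R S A) (pi : S -> R) (g : S -> jaction A -> R).

Lemma Pmu_stochastic mu : valid_policy mu -> stochastic (Pmu P mu).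
Proof.
move=> mu_valid; case: P_kernel => P_ge0 P_sum1; split=> [s s'|s].
  by apply: sumr_ge0 => b _; rewrite mulr_ge0 ?jprob_ge0.
rewrite /Pmu exchange_big /= -(jprob_sum1 s mu_valid); apply: eq_bigr => b _.
by rewrite -mulr_sumr P_sum1 mulr1.
Qed.

Section Mixture.
Variables (mu : jpolicy R S A) (pi : S -> R) (s0 : S) (pi_ : jaction A -> S -> R).
Hypotheses (mu_valid : valid_policy mu) (pi_stat : stationary (Pmu P mu) pi).
Hypothesis pi_stat_ : forall a, stationary (Pmu P (set_action mu s0 a)) (pi_ a).

(* [lam a] makes [mix] and [pi] put the same mass [pi s0 * mu(a | s0)] on the
   state-action pair [(s0, a)]. *)
Let lam a := pi s0 * jprob mu s0 a / pi_ a s0.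
Let mix s := \sum_a lam a * pi_ a s.

Let pi_s0_gt0 a : 0 < pi_ a s0.
Proof. exact: stationary_gt0 (Pmu_ergodic (set_action_valid s0 a mu_valid)) (pi_stat_ a). Qed.

Let lam_ge0 a : 0 <= lam a.
Proof.
apply: divr_ge0 (ltW (pi_s0_gt0 a)).
by rewrite mulr_ge0 ?jprob_ge0 //; case: pi_stat.
Qed.

Let lam_pi_s0 a : lam a * pi_ a s0 = pi s0 * jprob mu s0 a.
Proof. by rewrite divfK // gt_eqF. Qed.

Let mix_s0 : mix s0 = pi s0.
Proof.
by rewrite /mix; under eq_bigr do rewrite lam_pi_s0; rewrite -mulr_sumr jprob_sum1 ?mulr1.
Qed.

Let mix_jprob (h : jaction A -> R) s :
  \sum_a lam a * (pi_ a s * \sum_b jprob (set_action mu s0 a) s b * h b) =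
  mix s * \sum_b jprob mu s b * h b.
Proof.
have [->|s_neq] := eqVneq s s0; last first.
  under eq_bigr do under eq_bigr do rewrite jprob_set_action_out //.
  by rewrite /mix mulr_suml; apply: eq_bigr => a _; rewrite mulrA.
rewrite mix_s0 mulr_sumr; apply: eq_bigr => a _.
under eq_bigr do rewrite jprob_set_action_at.
rewrite (bigD1 a) //= eqxx mul1r big1 ?addr0 => [|b /negbTE ->]; last by rewrite mul0r.
by rewrite mulrA lam_pi_s0 mulrA.
Qed.

Let mix_invariant : invariant_vec (Pmu P mu) mix.
Proof.
move=> s'; rewrite /Pmu.
under eq_bigr => s _ do rewrite -(mix_jprob (fun b => P s b s') s).
rewrite exchange_big; apply: eq_bigr => a _; rewrite -mulr_sumr.
by congr (_ * _); case: (pi_stat_ a) => _ [_]; exact.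
Qed.

Let mixE s : mix s = pi s.
Proof.
have mix_ge0 t : 0 <= mix t.
  by apply: sumr_ge0 => a _; rewrite mulr_ge0 //; case: (pi_stat_ a).
have [c mix_pi] :=
  invariant_proportional (Pmu_ergodic mu_valid) pi_stat mix_ge0 mix_invariant.
have c1 : c = 1.
  apply/esym/(mulIf (lt0r_neq0 (stationary_gt0 s0 (Pmu_ergodic mu_valid) pi_stat))).
  by rewrite mul1r -mix_pi mix_s0.
by rewrite mix_pi c1 mul1r.
Qed.

Let lam_sum1 : \sum_a lam a = 1.
Proof.
case: pi_stat => _ [<- _]; under [RHS]eq_bigr do rewrite -mixE.
rewrite /mix exchange_big; apply: eq_bigr => a _.
by rewrite -mulr_sumr; case: (pi_stat_ a) => _ [-> _]; rewrite mulr1.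
Qed.

Lemma eta_le_set_action_of_stationary g :
  exists a, eta g mu pi <= eta g (set_action mu s0 a) (pi_ a).
Proof.
have -> : eta g mu pi = \sum_a lam a * eta g (set_action mu s0 a) (pi_ a).
  rewrite /eta; under eq_bigr => s _ do rewrite -mixE -(mix_jprob (g s) s).
  by rewrite exchange_big; apply: eq_bigr => a _; rewrite mulr_sumr.
exact: convex_comb_le_max lam_ge0 lam_sum1.
Qed.

End Mixture.

Lemma eta_le_set_action g mu pi (s0 : S) :
  valid_policy mu -> stationary (Pmu P mu) pi ->
  exists a pia, stationary (Pmu P (set_action mu s0 a)) pia /\
                eta g mu pi <= eta g (set_action mu s0 a) pia.
Proof.
move=> mu_valid pi_stat.
have /fin_all_exists [pi_ pi_stat_] :
    forall a, exists pia, stationary (Pmu P (set_action mu s0 a)) pia.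
  by move=> a; exact/(stationary_exists s0)/Pmu_stochastic/set_action_valid.
have [a le_a] := eta_le_set_action_of_stationary mu_valid pi_stat pi_stat_ g.
by exists a, (pi_ a).
Qed.

Lemma eta_le_deterministic_on g mu pi (l : seq S) :
  valid_policy mu -> stationary (Pmu P mu) pi ->
  exists nu pinu, [/\ valid_policy nu, stationary (Pmu P nu) pinu,
    eta g mu pi <= eta g nu pinu & {in l, forall s, deterministic_at nu s}].
Proof.
move=> mu_valid pi_stat.
elim: l => [|s0 l [nu [pinu [nu_valid pinu_stat le_nu nu_det]]]]; first by exists mu, pi.
have [a [pia [pia_stat le_a]]] := eta_le_set_action g s0 nu_valid pinu_stat.
exists (set_action nu s0 a), pia; split=> //.
- exact: set_action_valid.
- exact: le_trans le_nu le_a.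
move=> s; rewrite inE /set_action; have [-> _|s_neq /= s_l] := eqVneq s s0.
  by exists a => i x; rewrite eqxx.
by have [a' nu_a'] := nu_det s s_l; exists a' => i x; rewrite (negbTE s_neq).
Qed.

Lemma eta_le_pure_policy g mu pi :
  valid_policy mu -> stationary (Pmu P mu) pi ->
  exists e pie, stationary (Pmu P (pure_policy R e)) pie /\
                eta g mu pi <= eta g (pure_policy R e) pie.
Proof.
move=> mu_valid pi_stat.
have [nu [pinu [_ pinu_stat le_nu nu_det]]] :=
  eta_le_deterministic_on g (enum S) mu_valid pi_stat.
have [e nuE] := deterministic_pure_policy (fun s => nu_det s (mem_enum _ s)).
by exists e, pinu; rewrite -nuE.
Qed.

Lemma Jmv_le_pure_policy (beta : R) (r : S -> jaction A -> R) mu pi :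
  0 <= beta -> valid_policy mu -> stationary (Pmu P mu) pi ->
  exists e pie, stationary (Pmu P (pure_policy R e)) pie /\
                Jmv beta r mu pi <= Jmv beta r (pure_policy R e) pie.
Proof.
move=> beta_ge0 mu_valid pi_stat.
have [e [pie [pie_stat le_e]]] :=
  eta_le_pure_policy (mv_linearization beta r (eta r mu pi)) mu_valid pi_stat.
exists e, pie; split=> //; apply: Jmv_le_mv_linearization le_e => //.
- by case: pi_stat => _ [].
- exact: pure_policy_valid.
- by case: pie_stat => _ [].
Qed.

Lemma Jmv_pure_policy_argmax (beta : R) (r : S -> jaction A -> R) (a0 : jaction A) :
  exists es : {ffun S -> jaction A}, forall e pie pies,
    stationary (Pmu P (pure_policy R e)) pie ->
    stationary (Pmu P (pure_policy R es)) pies ->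
    Jmv beta r (pure_policy R e) pie <= Jmv beta r (pure_policy R es) pies.
Proof.
have [S0|/card_gt0P [s0 _]] := posnP #|S|.
  by exists [ffun=> a0] => e pie pies _ /stationary_card_gt0; rewrite S0.
have /fin_all_exists [pi_ pi_stat] :
    forall e, exists pie, stationary (Pmu P (pure_policy R e)) pie.
  by move=> e; exact/(stationary_exists s0)/Pmu_stochastic/pure_policy_valid.
pose J e := Jmv beta r (pure_policy R e) (pi_ e).
have [es _ es_max] := @arg_maxP _ R _ [ffun=> a0] predT J isT.
exists es => e pie pies pie_stat pies_stat.
have pure_erg e' := Pmu_ergodic (pure_policy_valid R e').
rewrite (stationary_unique (pure_erg e) pie_stat (pi_stat e)).
by rewrite (stationary_unique (pure_erg es) pies_stat (pi_stat es)); exact: es_max.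
Qed.

End TeamGame.

Unset Implicit Arguments.

Theorem theorem1 (R : realType) (N : nat) (S : finType) (A : 'I_N -> finType)
  (P : S -> jaction A -> S -> R) (r : S -> jaction A -> R) (beta : R) :
  (forall i : 'I_N, (0 < #|A i|)%N) ->
  valid_kernel P ->
  0 <= beta ->
  (forall mu : jpolicy R S A, valid_policy mu -> ergodic (Pmu P mu)) ->
  exists (d : forall i : 'I_N, S -> A i),
    (* optimality of mu_star over U *)
    (forall (mu : jpolicy R S A) (pistar pi : S -> R),
       valid_policy mu ->
       stationary (Pmu P (det_policy R d)) pistar -> stationary (Pmu P mu) pi ->
       Jmv beta r mu pi <= Jmv beta r (det_policy R d) pistar)
    /\
    (* Nash equilibrium *)
    (forall (i : 'I_N) (m : S -> A i -> R) (pistar pi : S -> R),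
       valid_local_policy m ->
       stationary (Pmu P (det_policy R d)) pistar ->
       stationary (Pmu P (replace_policy (det_policy R d) m)) pi ->
       Jmv beta r (replace_policy (det_policy R d) m) pi <= Jmv beta r (det_policy R d) pistar).
Proof.
move=> A_nonempty P_kernel beta_ge0 Pmu_ergodic.
pose a0 : jaction A := [ffun i => xchoose (card_gt0P (A_nonempty i))].
have [es es_max] := Jmv_pure_policy_argmax P_kernel Pmu_ergodic beta r a0.
have es_opt mu pistar pi : valid_policy mu ->
    stationary (Pmu P (pure_policy R es)) pistar -> stationary (Pmu P mu) pi ->
    Jmv beta r mu pi <= Jmv beta r (pure_policy R es) pistar.
  move=> mu_valid es_stat mu_stat.
  have [e [pie [e_stat le_e]]] :=
    Jmv_le_pure_policy P_kernel Pmu_ergodic r beta_ge0 mu_valid mu_stat.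
  exact: le_trans le_e (es_max e pie pistar e_stat es_stat).
exists (fun i s => es s i); split; first exact: es_opt.
move=> i m pistar pi m_valid es_stat m_stat; apply: es_opt m_stat => //.
exact: replace_policy_valid (pure_policy_valid R es) m_valid.
Qed.
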